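(* Let $\phi$ be a formula. If there exists a closed term $M$ such that $M:\phi$ (with respect to $\Omega$), then $\phi$ is $\Lambda_{\mathrm{NF}}$-inhabited.
   Context: Formulas are built from propositional atoms with $\to$. Let $\mathcal X$ be a countably infinite set of variables with an injective map $\mathcal O:\mathcal X\to\mathbb N$; write $x<y$ iff $\mathcal O(x)<\mathcal O(y)$. Terms are terms of pure $\lambda$-calculus over $\mathcal X$, not identified up to $\alpha$-conversion; by convention two distinct $\lambda$'s never bind the same variable in a term and no variable is both free and bound in a term. $\mathrm{Free}(M)$ is the strictly increasing sequence of free variables of $M$. Hereditarily right-maximal (HRM) terms are defined inductively: every variable is HRM; if $M$ is HRM and $x$ is the greatest free variable of $M$, then $\lambda x.M$ is HRM; if $M,N$ are HRM and for each free variable $x$ of $M$ there is a free variable $y$ of $N$ with $x\le y$, then $(MN)$ is HRM. Fix a function $\Omega$ from variables to formulas such that $\Omega^{-1}(\phi)$ is infinite for every formula $\phi$. The judgment $M:\phi$ (''$M$ has type $\phi$'') is defined by: $x:\Omega(x)$; if $x:\chi$, $M:\psi$ and $\lambda x.M$ is HRM then $\lambda x.M:\chi\to\psi$; if $M:\chi\to\psi$, $N:\chi$ and $(MN)$ is HRM then $(MN):\psi$. $\Lambda_{\mathrm{NF}}$ denotes the set of typed terms in $\beta$-normal form; a $\Lambda_{\mathrm{NF}}$-inhabitant of $\phi$ is a closed term of $\Lambda_{\mathrm{NF}}$ of type $\phi$, and $\phi$ is $\Lambda_{\mathrm{NF}}$-inhabited if it has one. *)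

From Stdlib Require Import List.
Import ListNotations.
Set Implicit Arguments.

Inductive formula (A : Type) : Type :=
| Atom : A -> formula A
| Imp : formula A -> formula A -> formula A.
Arguments Atom {A} _.
Arguments Imp {A} _ _.

(* Pure lambda terms over variables X, NOT identified up to alpha. *)
Inductive term (X : Type) : Type :=
| Var : X -> term X
| Lam : X -> term X -> term X
| App : term X -> term X -> term X.
Arguments Var {X} _.
Arguments Lam {X} _ _.
Arguments App {X} _ _.

Section Terms.
Variable X : Type.

Inductive free : X -> term X -> Prop :=
| free_var : forall x, free x (Var x)
| free_lam : forall x y M, free x M -> x <> y -> free x (Lam y M)
| free_appl : forall x M N, free x M -> free x (App M N)
| free_appr : forall x M N, free x N -> free x (App M N).

Inductive bound : X -> term X -> Prop :=
| bound_here : forall x M, bound x (Lam x M)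
| bound_lam : forall x y M, bound x M -> bound x (Lam y M)
| bound_appl : forall x M N, bound x M -> bound x (App M N)
| bound_appr : forall x M N, bound x N -> bound x (App M N).

Fixpoint binders (M : term X) : list X :=
  match M with
  | Var _ => []
  | Lam x M => x :: binders M
  | App M N => binders M ++ binders N
  end.

(* The paper's naming convention: two distinct lambdas never bind the same
   variable, and no variable is both free and bound. *)
Definition well_named (M : term X) : Prop :=
  NoDup (binders M) /\ (forall x, ~ (free x M /\ bound x M)).

Definition closed (M : term X) : Prop := forall x, ~ free x M.

Inductive has_redex : term X -> Prop :=
| redex_here : forall x M N, has_redex (App (Lam x M) N)
| redex_lam : forall x M, has_redex M -> has_redex (Lam x M)
| redex_appl : forall M N, has_redex M -> has_redex (App M N)
| redex_appr : forall M N, has_redex N -> has_redex (App M N).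

Definition beta_normal (M : term X) : Prop := ~ has_redex M.

(* Hereditarily right-maximal terms, w.r.t. the order x < y iff O x < O y *)
Inductive HRM (O : X -> nat) : term X -> Prop :=
| HRM_var : forall x, HRM O (Var x)
| HRM_lam : forall x M, HRM O M -> free x M ->
    (forall y, free y M -> O y <= O x) -> HRM O (Lam x M)
| HRM_app : forall M N, HRM O M -> HRM O N ->
    (forall x, free x M -> exists y, free y N /\ O x <= O y) ->
    HRM O (App M N).

Inductive has_type {A : Type} (O : X -> nat) (Omega : X -> formula A)
  : term X -> formula A -> Prop :=
| ty_var : forall x, has_type O Omega (Var x) (Omega x)
| ty_lam : forall x M chi psi,
    has_type O Omega (Var x) chi -> has_type O Omega M psi ->
    HRM O (Lam x M) -> has_type O Omega (Lam x M) (Imp chi psi)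
| ty_app : forall M N chi psi,
    has_type O Omega M (Imp chi psi) -> has_type O Omega N chi ->
    HRM O (App M N) -> has_type O Omega (App M N) psi.

Definition infinite_pred (P : X -> Prop) : Prop :=
  ~ exists l : list X, forall x, P x -> In x l.

Definition NF_inhabited {A : Type} (O : X -> nat) (Omega : X -> formula A)
  (phi : formula A) : Prop :=
  exists N, closed N /\ well_named N /\ beta_normal N /\ has_type O Omega N phi.

End Terms.

(* Translate the closed term into a de Bruijn term whose binders carry their types.
   There the HRM condition becomes: every lambda uses index 0, and in an application
   every free index of the function is bounded by a free index of the argument (a
   smaller index is bound later, hence by a greater variable).  Typing and this
   condition survive beta-reduction, and simply typed terms are weakly normalizing
   (Turing's argument, by induction on the type of the substituted variable).  The
   normal form is named back by choosing every binder fresh, of the prescribed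
   type and greater than every variable met so far; the result is well named, HRM
   and typed. *)

From Stdlib Require Import List Arith Lia Relations Permutation ClassicalEpsilon Wf_nat.
Import ListNotations.

(** * De Bruijn terms with typed binders *)

Inductive dterm (A : Type) : Type :=
| dVar : nat -> dterm A
| dLam : formula A -> dterm A -> dterm A
| dApp : dterm A -> dterm A -> dterm A.
Arguments dVar {A} _.
Arguments dLam {A} _ _.
Arguments dApp {A} _ _.

Section DeBruijn.
Context {A : Type}.
Implicit Types (t u s b : dterm A) (f g p : formula A) (G : list (formula A)).

Inductive dfree : nat -> dterm A -> Prop :=
| dfree_var : forall i, dfree i (dVar i)
| dfree_lam : forall i f b, dfree (S i) b -> dfree i (dLam f b)
| dfree_appl : forall i t u, dfree i t -> dfree i (dApp t u)
| dfree_appr : forall i t u, dfree i u -> dfree i (dApp t u).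

Lemma dfree_var_iff i j : dfree i (dVar j) <-> i = j.
Proof. split; [inversion 1; auto | intros ->; constructor]. Qed.

Lemma dfree_lam_iff i f b : dfree i (dLam f b) <-> dfree (S i) b.
Proof. split; [inversion 1; auto | constructor; auto]. Qed.

Lemma dfree_app_iff i t u : dfree i (dApp t u) <-> dfree i t \/ dfree i u.
Proof.
  split; [inversion 1; auto | intros [H|H]; [apply dfree_appl | apply dfree_appr]; auto].
Qed.

Definition shift (d c i : nat) : nat := if i <? c then i else i + d.

Fixpoint lift (d c : nat) t : dterm A :=
  match t with
  | dVar i => dVar (shift d c i)
  | dLam f b => dLam f (lift d (S c) b)
  | dApp t u => dApp (lift d c t) (lift d c u)
  end.

Fixpoint subst (k : nat) s t : dterm A :=
  match t with
  | dVar i => if i <? k then dVar i else if i =? k then lift k 0 s else dVar (pred i)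
  | dLam f b => dLam f (subst (S k) s b)
  | dApp t u => dApp (subst k s t) (subst k s u)
  end.

Lemma dfree_lift t : forall d c i,
  dfree i (lift d c t) <-> exists j, dfree j t /\ i = shift d c j.
Proof.
  unfold shift; induction t as [n|f b IH|t IHt u IHu]; intros d c i; simpl.
  - rewrite dfree_var_iff. split; [intros ->; exists n; split; [constructor | auto]|].
    intros [j [Hj ->]]. apply dfree_var_iff in Hj. subst. reflexivity.
  - rewrite dfree_lam_iff, IH. split.
    + intros [[|j] [Hj E]]; [destruct (Nat.ltb_spec 0 (S c)); lia|].
      exists j; split; [apply dfree_lam_iff; auto|].
      destruct (Nat.ltb_spec j c), (Nat.ltb_spec (S j) (S c)); lia.
    + intros [j [Hj E]]. exists (S j); split; [apply dfree_lam_iff in Hj; auto|].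
      destruct (Nat.ltb_spec j c), (Nat.ltb_spec (S j) (S c)); lia.
  - rewrite dfree_app_iff, IHt, IHu. split.
    + intros [[j [Hj E]]|[j [Hj E]]]; exists j; rewrite dfree_app_iff; auto.
    + intros [j [Hj E]]. apply dfree_app_iff in Hj. destruct Hj; eauto.
Qed.

Lemma dfree_subst t : forall k s i, dfree i (subst k s t) <->
  (i < k /\ dfree i t) \/ (k <= i /\ dfree (S i) t) \/
  (dfree k t /\ exists j, dfree j s /\ i = j + k).
Proof.
  induction t as [n|f b IH|t IHt u IHu]; intros k s i; simpl.
  - rewrite !dfree_var_iff.
    destruct (Nat.ltb_spec n k); [|destruct (Nat.eqb_spec n k)].
    + rewrite dfree_var_iff. split; [intros ->; auto | intros [[_ ->]|[[? ?]|[? _]]]; lia].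
    + subst n. rewrite dfree_lift. unfold shift. split.
      * intros [j [Hj ->]]. right; right. split; [auto|]. exists j. split; [auto|].
        destruct (Nat.ltb_spec j 0); lia.
      * intros [[? ?]|[[? ?]|[_ [j [Hj ->]]]]]; try lia. exists j. split; [auto|].
        destruct (Nat.ltb_spec j 0); lia.
    + rewrite dfree_var_iff. split; [intros ->; right; left; lia|].
      intros [[? ?]|[[? ?]|[? _]]]; lia.
  - rewrite !dfree_lam_iff, IH.
    split; intros [[? H]|[[? H]|[H [j [Hj E]]]]];
      solve [left; split; [lia | exact H] | right; left; split; [lia | exact H]
            | right; right; split; [exact H | exists j; split; [exact Hj | lia]]].
  - rewrite !dfree_app_iff, IHt, IHu.
    split; [intros [[[? H]|[[? H]|[H E]]]|[[? H]|[[? H]|[H E]]]]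
           | intros [[? [H|H]]|[[? [H|H]]|[[H|H] E]]]]; tauto.
Qed.

Inductive dhas_type : list (formula A) -> dterm A -> formula A -> Prop :=
| dty_var : forall G i f, nth_error G i = Some f -> dhas_type G (dVar i) f
| dty_lam : forall G f b g, dhas_type (f :: G) b g -> dhas_type G (dLam f b) (Imp f g)
| dty_app : forall G t u f g,
    dhas_type G t (Imp f g) -> dhas_type G u f -> dhas_type G (dApp t u) g.

Lemma dhas_type_dfree G t f i : dhas_type G t f -> dfree i t -> i < length G.
Proof.
  intros Ht. revert i. induction Ht; intros j Hj.
  - apply dfree_var_iff in Hj as ->. apply nth_error_Some. congruence.
  - apply dfree_lam_iff, IHHt in Hj. simpl in Hj. lia.
  - apply dfree_app_iff in Hj as [Hj|Hj]; auto.
Qed.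

Lemma dhas_type_lift G1 G2 D t f : dhas_type (G1 ++ G2) t f ->
  dhas_type (G1 ++ D ++ G2) (lift (length D) (length G1) t) f.
Proof.
  remember (G1 ++ G2) as G eqn:E. intros Ht. revert G1 E.
  induction Ht as [G i f Hi|G f b g Hb IH|G t u f g Ht IHt Hu IHu]; intros G1 ->; simpl.
  - constructor. unfold shift. destruct (Nat.ltb_spec i (length G1)).
    + rewrite nth_error_app1 in *; auto.
    + rewrite nth_error_app2 in * by lia. rewrite nth_error_app2 by lia.
      replace (i + length D - length G1 - length D) with (i - length G1) by lia. exact Hi.
  - constructor. exact (IH (f :: G1) eq_refl).
  - econstructor; eauto.
Qed.

Lemma dhas_type_subst G1 G p s t f : dhas_type (G1 ++ p :: G) t f -> dhas_type G s p ->
  dhas_type (G1 ++ G) (subst (length G1) s t) f.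
Proof.
  remember (G1 ++ p :: G) as G' eqn:E. intros Ht Hs. revert G1 E.
  induction Ht as [G' i f Hi|G' f b g Hb IH|G' t u f g Ht IHt Hu IHu]; intros G1 ->; simpl.
  - destruct (Nat.ltb_spec i (length G1)); [|destruct (Nat.eqb_spec i (length G1))].
    + constructor. rewrite nth_error_app1 in *; auto.
    + subst i. rewrite nth_error_app2, Nat.sub_diag in Hi by lia. injection Hi as <-.
      exact (dhas_type_lift [] G G1 _ _ Hs).
    + constructor. rewrite nth_error_app2 in * by lia.
      destruct (i - length G1) as [|k] eqn:En; [lia|].
      replace (pred i - length G1) with k by lia. exact Hi.
  - constructor. exact (IH (f :: G1) eq_refl).
  - econstructor; eauto.
Qed.

Inductive dstep : dterm A -> dterm A -> Prop :=
| dstep_beta : forall f b s, dstep (dApp (dLam f b) s) (subst 0 s b)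
| dstep_lam : forall f b b', dstep b b' -> dstep (dLam f b) (dLam f b')
| dstep_appl : forall t t' u, dstep t t' -> dstep (dApp t u) (dApp t' u)
| dstep_appr : forall t u u', dstep u u' -> dstep (dApp t u) (dApp t u').

Notation dsteps := (clos_refl_trans (dterm A) dstep).

Lemma dsteps_lam f b b' : dsteps b b' -> dsteps (dLam f b) (dLam f b').
Proof. induction 1; eauto using rt_step, rt_refl, rt_trans, dstep_lam. Qed.

Lemma dsteps_app t t' u u' : dsteps t t' -> dsteps u u' -> dsteps (dApp t u) (dApp t' u').
Proof.
  intros Ht Hu. apply rt_trans with (dApp t' u).
  - clear Hu. induction Ht; eauto using rt_step, rt_refl, rt_trans, dstep_appl.
  - clear Ht. induction Hu; eauto using rt_step, rt_refl, rt_trans, dstep_appr.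
Qed.

Lemma dsteps_invariant (P : dterm A -> Prop) :
  (forall t t', dstep t t' -> P t -> P t') -> forall t t', dsteps t t' -> P t -> P t'.
Proof. intros HP t t'. induction 1; eauto. Qed.

Lemma dstep_has_type t t' : dstep t t' -> forall G f, dhas_type G t f -> dhas_type G t' f.
Proof.
  induction 1; intros G g Ht; inversion Ht as [|? ? ? ? Hb|? ? ? ? ? Htu Hu]; subst.
  - inversion Htu; subst. exact (dhas_type_subst [] _ _ _ _ _ ltac:(eassumption) Hu).
  - constructor; auto.
  - econstructor; eauto.
  - econstructor; eauto.
Qed.

Lemma dsteps_has_type G t t' f : dsteps t t' -> dhas_type G t f -> dhas_type G t' f.
Proof. apply (dsteps_invariant (fun t => dhas_type G t f)). eauto using dstep_has_type. Qed.

Inductive dHRM : dterm A -> Prop :=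
| dHRM_var : forall i, dHRM (dVar i)
| dHRM_lam : forall f b, dHRM b -> dfree 0 b -> dHRM (dLam f b)
| dHRM_app : forall t u, dHRM t -> dHRM u ->
    (forall i, dfree i t -> exists j, dfree j u /\ j <= i) -> dHRM (dApp t u).

Lemma dHRM_lift t : forall d c, dHRM t -> dHRM (lift d c t).
Proof.
  induction t as [n|f b IH|t IHt u IHu]; intros d c Ht;
    inversion Ht as [|? ? Hb H0|? ? Htt Hu Hdom]; subst; simpl.
  - constructor.
  - constructor; auto. apply dfree_lift. exists 0. split; [exact H0 | reflexivity].
  - constructor; auto. intros i Hi. apply dfree_lift in Hi as [j [Hj ->]].
    destruct (Hdom j Hj) as [j' [Hj' Le]].
    exists (shift d c j'). split; [apply dfree_lift; eauto|].
    unfold shift. destruct (Nat.ltb_spec j c), (Nat.ltb_spec j' c); lia.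
Qed.

Lemma dfree_subst_lt k s t i : i < k -> dfree i t -> dfree i (subst k s t).
Proof. intros. apply dfree_subst. auto. Qed.

Lemma dfree_subst_gt k s t i : k < i -> dfree i t -> dfree (pred i) (subst k s t).
Proof.
  intros. apply dfree_subst. right; left. replace (S (pred i)) with i by lia. split; [lia | auto].
Qed.

Lemma dfree_subst_eq k s t j : dfree k t -> dfree j s -> dfree (j + k) (subst k s t).
Proof. intros. apply dfree_subst. eauto 6. Qed.

Lemma dfree_subst_le k s t a c : dfree c t -> c <= S a -> (k < c \/ c <= a) ->
  (c = k -> exists j, dfree j s /\ j + k <= a) ->
  exists c', dfree c' (subst k s t) /\ c' <= a.
Proof.
  intros Hc Le Or Hk. destruct (Nat.lt_trichotomy c k) as [Lt|[->|Gt]].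
  - exists c. split; [apply dfree_subst_lt; auto | lia].
  - destruct (Hk eq_refl) as [j [Hj Le']].
    exists (j + k). split; [apply dfree_subst_eq; auto | lia].
  - exists (pred c). split; [apply dfree_subst_gt; auto | lia].
Qed.

Lemma dHRM_subst t : forall k s, dHRM t -> dHRM s ->
  (forall i, dfree i t -> k < i -> exists j, dfree j s /\ j + k < i) ->
  dHRM (subst k s t).
Proof.
  induction t as [n|f b IH|t IHt u IHu]; intros k s Ht Hs Hc; simpl;
    inversion Ht as [|? ? Hb H0|? ? Htt Hu Hdom]; subst.
  - destruct (n <? k); [constructor|]. destruct (n =? k); [apply dHRM_lift; auto | constructor].
  - constructor; [|apply dfree_subst_lt; auto; lia].
    apply IH; auto. intros [|i] Hi Lt; [lia|].
    destruct (Hc i) as [j [Hj E]]; [apply dfree_lam_iff; auto | lia |].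
    exists j. split; [auto | lia].
  - assert (Hct : forall i, dfree i t -> k < i -> exists j, dfree j s /\ j + k < i)
      by (intros; apply Hc; auto; apply dfree_appl; auto).
    constructor; [apply IHt; auto | apply IHu; auto; intros; apply Hc; auto using dfree_appr |].
    intros a Ha. apply dfree_subst in Ha as [[Lt Ha]|[[Le Ha]|[Ha [j [Hj ->]]]]].
    + destruct (Hdom a Ha) as [c [Hcu Le]].
      apply (dfree_subst_le _ _ _ _ c); auto; lia.
    + destruct (Hdom _ Ha) as [c [Hcu Le']].
      apply (dfree_subst_le _ _ _ _ c); auto; [lia|].
      intros ->. destruct (Hct (S a) Ha) as [j [Hj Lt]]; [lia|]. exists j. split; [auto | lia].
    + destruct (Hdom _ Ha) as [c [Hcu Le]].
      apply (dfree_subst_le _ _ _ _ c); auto; [lia | lia |].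
      intros ->. exists j. split; [auto | lia].
Qed.

(* Free variables are preserved since an HRM abstraction uses its bound variable. *)
Lemma dstep_dHRM t t' : dstep t t' -> dHRM t -> dHRM t' /\ (forall i, dfree i t' <-> dfree i t).
Proof.
  induction 1 as [f b s|f b b' _ IH|t t' u _ IH|t u u' _ IH]; intro Ht;
    inversion Ht as [|? ? Hb H0|? ? Htt Hu Hdom]; subst.
  - inversion Htt as [|? ? Hb H0|]; subst. split.
    + apply dHRM_subst; auto. intros [|i] Hi Lt; [lia|].
      destruct (Hdom i) as [j [Hj Le]]; [apply dfree_lam_iff; auto|].
      exists j. split; [auto | lia].
    + intro i. rewrite dfree_app_iff, dfree_lam_iff, dfree_subst. split.
      * intros [[Lt _]|[[_ Hi]|[_ [j [Hj ->]]]]]; [lia | auto |].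
        rewrite Nat.add_0_r. auto.
      * intros [Hi|Hi]; [right; left; split; [lia | auto] |].
        right; right. split; [auto | exists i; split; [auto | lia]].
  - destruct (IH Hb) as [Hb' Hfree]. split.
    + constructor; [auto | apply Hfree; auto].
    + intro i. rewrite !dfree_lam_iff. auto.
  - destruct (IH Htt) as [Ht' Hfree]. split.
    + constructor; auto. intros i Hi. apply Hdom, Hfree, Hi.
    + intro i. rewrite !dfree_app_iff, Hfree. tauto.
  - destruct (IH Hu) as [Hu' Hfree]. split.
    + constructor; auto. intros i Hi. destruct (Hdom i Hi) as [j [Hj Le]].
      exists j. split; [apply Hfree; auto | auto].
    + intro i. rewrite !dfree_app_iff, Hfree. tauto.
Qed.

Lemma dsteps_dHRM t t' : dsteps t t' -> dHRM t -> dHRM t'.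
Proof. apply dsteps_invariant. intros. eapply dstep_dHRM; eauto. Qed.

(** * Weak normalization *)

Fixpoint neutral t : Prop :=
  match t with dVar _ => True | dLam _ _ => False | dApp t u => neutral t /\ normal u end
with normal t : Prop :=
  match t with dVar _ => True | dLam _ b => normal b | dApp t u => neutral t /\ normal u end.

Lemma normal_cases t : normal t -> neutral t \/ exists f b, t = dLam f b /\ normal b.
Proof. destruct t; simpl; eauto. Qed.

Lemma normal_lift t : forall d c,
  (neutral t -> neutral (lift d c t)) /\ (normal t -> normal (lift d c t)).
Proof.
  induction t as [n|f b IH|t IHt u IHu]; intros d c; simpl; [tauto | split; [tauto | apply IH]|].
  split; intros [Ht Hu]; split; apply IHt || apply IHu; auto.
Qed.

Inductive imp_suffix : formula A -> formula A -> Prop :=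
| imp_suffix_refl : forall p, imp_suffix p p
| imp_suffix_imp : forall g p q, imp_suffix g q -> imp_suffix g (Imp p q).

Fixpoint fsize f : nat :=
  match f with Atom _ => 1 | Imp f g => S (fsize f + fsize g) end.

Lemma imp_suffix_imp_inv f g p : imp_suffix (Imp f g) p -> fsize f < fsize p /\ imp_suffix g p.
Proof.
  remember (Imp f g) as h eqn:E. induction 1; subst; simpl.
  - split; [lia | repeat constructor].
  - destruct IHimp_suffix as [Hsize Hsuf]; auto. split; [lia | constructor; auto].
Qed.

Definition subst_normalizing p : Prop := forall G b g s,
  dhas_type (p :: G) b g -> dhas_type G s p -> normal b -> normal s ->
  exists r, dsteps (subst 0 s b) r /\ normal r.

Lemma app_normalizes G t u f g : subst_normalizing f ->
  dhas_type G t (Imp f g) -> dhas_type G u f -> normal t -> normal u ->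
  exists r, dsteps (dApp t u) r /\ normal r.
Proof.
  intros Hf Ht Hu Nt Nu. destruct (normal_cases t Nt) as [Net|[c [b [-> Nb]]]].
  - exists (dApp t u). split; [apply rt_refl | split; auto].
  - inversion Ht; subst. destruct (Hf G b g u) as [r [Sr Nr]]; auto.
    exists r. split; [|auto]. eapply rt_trans; [apply rt_step, dstep_beta | exact Sr].
Qed.

(* After substitution a neutral term stays neutral unless its type is a final segment
   of [p]; hence the redexes this creates substitute at types strictly smaller than [p]. *)
Lemma subst_normalizes p : forall t G1 G g s,
  dhas_type (G1 ++ p :: G) t g -> dhas_type G s p -> normal s ->
  (normal t -> exists r, dsteps (subst (length G1) s t) r /\ normal r) /\
  (neutral t -> exists r, dsteps (subst (length G1) s t) r /\ normal r /\
                          (neutral r \/ imp_suffix g p)).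
Proof.
  induction p as [p IHp] using (induction_ltof1 _ fsize).
  assert (Hsmaller : forall f g, imp_suffix (Imp f g) p -> subst_normalizing f).
  { intros f g Hsuf G b h s Hb Hs Nb Ns.
    apply imp_suffix_imp_inv in Hsuf as [Hlt _].
    exact (proj1 (IHp f Hlt b [] G h s Hb Hs Ns) Nb). }
  induction t as [n|f b IH|t IHt u IHu]; intros G1 G g s Ht Hs Ns;
    inversion Ht as [? ? ? Hn|? ? ? ? Hb|? ? ? c ? Htt Hu]; subst.
  - assert (NE : exists r, dsteps (subst (length G1) s (dVar n)) r /\ normal r /\
                           (neutral r \/ imp_suffix g p)).
    { simpl. destruct (Nat.ltb_spec n (length G1)); [|destruct (Nat.eqb_spec n (length G1))].
      - exists (dVar n). repeat split; [apply rt_refl | simpl; auto].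
      - subst n. rewrite nth_error_app2, Nat.sub_diag in Hn by lia. injection Hn as <-.
        exists (lift (length G1) 0 s).
        split; [apply rt_refl | split; [apply normal_lift; auto | right; constructor]].
      - exists (dVar (pred n)). repeat split; [apply rt_refl | simpl; auto]. }
    split; intros _; [destruct NE as [r [? [? _]]]; eauto | exact NE].
  - simpl. split; [|tauto]. intro Nb.
    destruct (proj1 (IH (f :: G1) G _ s Hb Hs Ns) Nb) as [r [Sr Nr]].
    exists (dLam f r). split; [apply dsteps_lam; auto | auto].
  - assert (NE : neutral (dApp t u) -> exists r, dsteps (subst (length G1) s (dApp t u)) r /\
                   normal r /\ (neutral r \/ imp_suffix g p)).
    { intros [Net Nu]. simpl.
      destruct (proj2 (IHt G1 G _ s Htt Hs Ns) Net) as [rt [St [Nrt [Nert|Hsuf]]]];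
        destruct (proj1 (IHu G1 G _ s Hu Hs Ns) Nu) as [ru [Su Nru]].
      - exists (dApp rt ru). split; [apply dsteps_app; auto | simpl; auto].
      - destruct (app_normalizes (G1 ++ G) rt ru c g (Hsmaller _ _ Hsuf)) as [r [Sr Nr]]; auto.
        + eapply dsteps_has_type; [exact St | eapply dhas_type_subst; eauto].
        + eapply dsteps_has_type; [exact Su | eapply dhas_type_subst; eauto].
        + exists r. split; [eapply rt_trans; [apply dsteps_app; eauto | exact Sr]|].
          split; [auto | right; exact (proj2 (imp_suffix_imp_inv _ _ _ Hsuf))]. }
    split; [intro N; destruct (NE N) as [r [? [? _]]]; eauto | exact NE].
Qed.

Lemma weak_normalization G t f : dhas_type G t f -> exists r, dsteps t r /\ normal r.
Proof.
  induction 1 as [G i f _|G f b g _ [r [Sr Nr]]|G t u f g Ht [rt [St Nt]] Hu [ru [Su Nu]]].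
  - exists (dVar i). split; [apply rt_refl | simpl; auto].
  - exists (dLam f r). split; [apply dsteps_lam; auto | auto].
  - destruct (app_normalizes G rt ru f g) as [r [Sr Nr]]; auto.
    + intros G' b h s Hb Hs Nb Ns. exact (proj1 (subst_normalizes f b [] G' h s Hb Hs Ns) Nb).
    + eapply dsteps_has_type; eauto.
    + eapply dsteps_has_type; eauto.
    + exists r. split; [eapply rt_trans; [apply dsteps_app; eauto | exact Sr] | auto].
Qed.
End DeBruijn.

(** * Named terms and de Bruijn terms *)

Section Named.
Context {X : Type}.

Lemma free_var_iff (x y : X) : free x (Var y) <-> x = y.
Proof. split; [inversion 1; auto | intros ->; constructor]. Qed.

Lemma free_lam_iff (x y : X) M : free x (Lam y M) <-> free x M /\ x <> y.
Proof. split; [inversion 1; auto | intros [? ?]; constructor; auto]. Qed.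

Lemma free_app_iff (x : X) M N : free x (App M N) <-> free x M \/ free x N.
Proof. split; [inversion 1; auto | intros [?|?]; [apply free_appl | apply free_appr]; auto]. Qed.

Lemma has_type_HRM {A} (O : X -> nat) (Omega : X -> formula A) M p :
  has_type O Omega M p -> HRM O M.
Proof. destruct 1; auto. constructor. Qed.

Context {A : Type}.
Variables (O : X -> nat) (Omega : X -> formula A).
Hypothesis O_inj : forall x y, O x = O y -> x = y.

Definition decreasing_on (P : X -> Prop) (ns : list X) : Prop :=
  forall i j a b, i < j -> nth_error ns i = Some a -> nth_error ns j = Some b ->
  P a -> P b -> O b < O a.

Lemma decreasing_on_impl (P Q : X -> Prop) ns :
  (forall y, In y ns -> Q y -> P y) -> decreasing_on P ns -> decreasing_on Q ns.
Proof.
  intros HPQ Hdec i j a b Lt Ha Hb Qa Qb.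
  apply (Hdec i j); auto; apply HPQ; eauto using nth_error_In.
Qed.

Lemma decreasing_on_cons (P : X -> Prop) x ns :
  (forall y, In y ns -> P y -> O y < O x) -> decreasing_on P ns -> decreasing_on P (x :: ns).
Proof.
  intros Hx Hdec [|i] [|j] a b Lt Ha Hb Pa Pb; simpl in *; try lia.
  - injection Ha as <-. eauto using nth_error_In.
  - apply (Hdec i j); auto; lia.
Qed.

Fixpoint index_of (ns : list X) (x : X) : nat :=
  match ns with
  | [] => 0
  | y :: ns => if O y =? O x then 0 else S (index_of ns x)
  end.

Lemma nth_error_index_of ns x : In x ns -> nth_error ns (index_of ns x) = Some x.
Proof.
  induction ns as [|y ns IH]; simpl; [tauto|]. intros [->|H].
  - rewrite Nat.eqb_refl. reflexivity.
  - destruct (Nat.eqb_spec (O y) (O x)) as [E|]; simpl; auto. rewrite (O_inj _ _ E). reflexivity.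
Qed.

Lemma index_of_le (P : X -> Prop) ns a b : decreasing_on P ns -> In a ns -> In b ns ->
  P a -> P b -> O a <= O b -> index_of ns b <= index_of ns a.
Proof.
  intros Hdec Ha Hb Pa Pb Le. destruct (Nat.le_gt_cases (index_of ns b) (index_of ns a)); auto.
  enough (O b < O a) by lia.
  apply (Hdec (index_of ns a) (index_of ns b)); auto using nth_error_index_of.
Qed.

Fixpoint to_db (ns : list X) (M : term X) : dterm A :=
  match M with
  | Var x => dVar (index_of ns x)
  | Lam x M => dLam (Omega x) (to_db (x :: ns) M)
  | App M N => dApp (to_db ns M) (to_db ns N)
  end.

Lemma dfree_to_db (M : term X) : forall ns i,
  dfree i (to_db ns M) <-> exists x, free x M /\ index_of ns x = i.
Proof.
  induction M as [x|x M IH|M IHM N IHN]; intros ns i; simpl.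
  - rewrite dfree_var_iff. split; [intros ->; exists x; split; [constructor | auto]|].
    intros [y [Hy <-]]. apply free_var_iff in Hy as ->. reflexivity.
  - rewrite dfree_lam_iff, IH. split.
    + intros [y [Hy E]]. simpl in E. destruct (Nat.eqb_spec (O x) (O y)) as [|Ne]; [discriminate|].
      exists y. split; [apply free_lam_iff; split; [auto | intros ->; auto] | congruence].
    + intros [y [Hy E]]. apply free_lam_iff in Hy as [Hy Ne].
      exists y. split; [auto|]. simpl. destruct (Nat.eqb_spec (O x) (O y)) as [E'|].
      * apply O_inj in E'. congruence.
      * congruence.
  - rewrite dfree_app_iff, IHM, IHN. split.
    + intros [[y [Hy E]]|[y [Hy E]]]; exists y; rewrite free_app_iff; auto.
    + intros [y [Hy E]]. apply free_app_iff in Hy as [Hy|Hy]; eauto.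
Qed.

Lemma in_cons_of_free_lam (x : X) (ns : list X) (M : term X) :
  (forall y, free y (Lam x M) -> In y ns) -> forall y, free y M -> In y (x :: ns).
Proof.
  intros Hs y Hy. destruct (Nat.eqb_spec (O y) (O x)) as [E|Ne].
  - left. symmetry. apply O_inj, E.
  - right. apply Hs, free_lam_iff. split; [auto | intros ->; auto].
Qed.

Lemma to_db_has_type (M : term X) : forall ns p, (forall x, free x M -> In x ns) ->
  has_type O Omega M p -> dhas_type (map Omega ns) (to_db ns M) p.
Proof.
  induction M as [x|x M IH|M IHM N IHN]; intros ns p Hs Ht; simpl;
    inversion Ht as [|? ? ? ? Hx HM|]; subst.
  - constructor. rewrite nth_error_map, nth_error_index_of; auto using free_var.
  - inversion Hx; subst. constructor. exact (IH (x :: ns) _ (in_cons_of_free_lam _ _ _ Hs) HM).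
  - econstructor; [apply IHM | apply IHN]; eauto; intros y Hy; apply Hs, free_app_iff; auto.
Qed.

Lemma to_db_dHRM (M : term X) : forall ns,
  NoDup (ns ++ binders M) -> decreasing_on (fun x => free x M) ns ->
  (forall x, free x M -> In x ns) -> HRM O M -> dHRM (to_db ns M).
Proof.
  induction M as [x|x M IH|M IHM N IHN]; intros ns Hnd Hdec Hs Hh; simpl;
    inversion Hh as [|? ? HM Hx Hmax|? ? HM HN Hdom]; subst.
  - constructor.
  - simpl in Hnd.
    assert (Nx : ~ In x ns) by (intro; apply (NoDup_remove_2 _ _ _ Hnd), in_or_app; auto).
    constructor.
    + apply IH; [| | apply in_cons_of_free_lam; auto | auto].
      * simpl. eapply Permutation_NoDup; [apply Permutation_sym, Permutation_middle | exact Hnd].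
      * apply decreasing_on_cons.
        -- intros y Hy HyM. assert (y <> x) by (intros ->; auto).
           assert (O y <> O x) by (intro E; apply O_inj in E; auto). specialize (Hmax y HyM). lia.
        -- apply (decreasing_on_impl (fun y => free y (Lam x M))); auto.
           intros y Hy HyM. apply free_lam_iff. split; [auto | intros ->; auto].
    + apply dfree_to_db. exists x. split; [auto | simpl; rewrite Nat.eqb_refl; reflexivity].
  - simpl in Hnd. constructor.
    + apply IHM; auto.
      * rewrite app_assoc in Hnd. eapply NoDup_app_remove_r; eauto.
      * apply (decreasing_on_impl (fun y => free y (App M N))); auto. intros; apply free_appl; auto.
      * intros y Hy; apply Hs, free_appl; auto.
    + apply IHN; auto.
      * apply (NoDup_app_remove_l (binders M)).
        eapply Permutation_NoDup; [apply Permutation_app_swap_app | exact Hnd].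
      * apply (decreasing_on_impl (fun y => free y (App M N))); auto. intros; apply free_appr; auto.
      * intros y Hy; apply Hs, free_appr; auto.
    + intros i Hi. apply dfree_to_db in Hi as [a [Ha <-]].
      destruct (Hdom a Ha) as [b [Hb Le]].
      exists (index_of ns b). split; [apply dfree_to_db; eauto|].
      apply (index_of_le (fun y => free y (App M N))); auto using free_appl, free_appr.
Qed.

Lemma closed_to_db (M : term X) p : closed M -> well_named M -> has_type O Omega M p ->
  dhas_type [] (to_db [] M) p /\ dHRM (to_db [] M).
Proof.
  intros Hc [Hnd _] Ht. split.
  - apply (to_db_has_type M [] p); [|exact Ht]. intros x Hx. destruct (Hc x Hx).
  - apply to_db_dHRM; [exact Hnd | | | eapply has_type_HRM; eauto].
    + intros [|i] j a b _ Ha; discriminate.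
    + intros x Hx. destruct (Hc x Hx).
Qed.

Definition binder_bound (P : term X) (n : nat) : nat :=
  fold_right (fun y acc => Nat.max (O y) acc) n (binders P).

Lemma le_binder_bound P n : n <= binder_bound P n.
Proof. unfold binder_bound. induction (binders P); simpl; lia. Qed.

Lemma binder_le_binder_bound P n y : In y (binders P) -> O y <= binder_bound P n.
Proof.
  unfold binder_bound. induction (binders P) as [|z l IH]; simpl; [tauto|].
  intros [->|H]; [lia | specialize (IH H); lia].
Qed.

Variables (fresh : formula A -> nat -> X) (x_default : X).
Hypothesis fresh_type : forall f n, Omega (fresh f n) = f.
Hypothesis fresh_gt : forall f n, n < O (fresh f n).

(* Binders exceed [n] and, in an argument, every binder of the function it is applied
   to, which makes them pairwise distinct; [x_default] is only read at out-of-scope indices. *)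
Fixpoint of_db (n : nat) (ns : list X) (t : dterm A) : term X :=
  match t with
  | dVar i => Var (nth i ns x_default)
  | dLam f b => Lam (fresh f n) (of_db (O (fresh f n)) (fresh f n :: ns) b)
  | dApp t u => App (of_db n ns t) (of_db (binder_bound (of_db n ns t) n) ns u)
  end.

Lemma scope_cons (x : X) ns f (b : dterm A) : (forall i, dfree i (dLam f b) -> i < length ns) ->
  forall i, dfree i b -> i < length (x :: ns).
Proof.
  intros Hlen [|i] Hi; simpl; [lia|]. apply -> Nat.succ_lt_mono. apply Hlen, dfree_lam, Hi.
Qed.

Lemma bounded_cons_fresh f n ns : (forall z, In z ns -> O z <= n) ->
  forall z, In z (fresh f n :: ns) -> O z <= O (fresh f n).
Proof. intros Hns z [<-|Hz]; [auto | specialize (Hns z Hz); pose proof (fresh_gt f n); lia]. Qed.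

Lemma bounded_binder_bound P n ns : (forall z, In z ns -> O z <= n) ->
  forall z, In z ns -> O z <= binder_bound P n.
Proof. intros Hns z Hz. specialize (Hns z Hz). pose proof (le_binder_bound P n). lia. Qed.

Lemma decreasing_cons_fresh f n ns : (forall z, In z ns -> O z <= n) ->
  decreasing_on (fun _ => True) ns -> decreasing_on (fun _ => True) (fresh f n :: ns).
Proof.
  intros Hns Hdec. apply decreasing_on_cons; [|exact Hdec].
  intros y Hy _. specialize (Hns y Hy). pose proof (fresh_gt f n). lia.
Qed.

Lemma dhas_type_map_scope ns t p : dhas_type (map Omega ns) t p ->
  forall i, dfree i t -> i < length ns.
Proof. intros Ht i Hi. rewrite <- (length_map Omega). exact (dhas_type_dfree _ _ _ _ Ht Hi). Qed.

Lemma of_db_binders_gt t : forall n ns y, In y (binders (of_db n ns t)) -> n < O y.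
Proof.
  induction t as [i|f b IH|t IHt u IHu]; intros n ns y H; simpl in H.
  - tauto.
  - destruct H as [<-|H]; [auto|]. apply IH in H. pose proof (fresh_gt f n). lia.
  - apply in_app_or in H as [H|H]; [eauto|].
    apply IHu in H. pose proof (le_binder_bound (of_db n ns t) n). lia.
Qed.

Lemma of_db_NoDup t : forall n ns, NoDup (binders (of_db n ns t)).
Proof.
  induction t as [i|f b IH|t IHt u IHu]; intros n ns; simpl.
  - constructor.
  - constructor; auto. intro H. apply of_db_binders_gt in H. lia.
  - apply NoDup_app; auto. intros y H1 H2. apply of_db_binders_gt in H2.
    pose proof (binder_le_binder_bound _ n y H1). lia.
Qed.

Lemma free_of_db_inv t : forall n ns y, (forall i, dfree i t -> i < length ns) ->
  free y (of_db n ns t) -> exists i, dfree i t /\ nth_error ns i = Some y.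
Proof.
  induction t as [i|f b IH|t IHt u IHu]; intros n ns y Hlen H; simpl in H.
  - apply free_var_iff in H as ->. exists i. split; [constructor|].
    apply nth_error_nth', Hlen. constructor.
  - apply free_lam_iff in H as [H Ne].
    destruct (IH _ _ _ (scope_cons _ _ _ _ Hlen) H) as [[|i] [Hi E]]; simpl in E; [congruence|].
    exists i. split; [apply dfree_lam; auto | auto].
  - apply free_app_iff in H as [H|H];
      [destruct (IHt n ns y ltac:(intros; apply Hlen, dfree_appl; auto) H) as [i [Hi E]]
      |destruct (IHu _ ns y ltac:(intros; apply Hlen, dfree_appr; auto) H) as [i [Hi E]]];
      exists i; split; auto using dfree_appl, dfree_appr.
Qed.

Lemma free_of_db t : forall n ns i y, (forall z, In z ns -> O z <= n) ->
  dfree i t -> nth_error ns i = Some y -> free y (of_db n ns t).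
Proof.
  induction t as [j|f b IH|t IHt u IHu]; intros n ns i y Hns Hi E; simpl.
  - apply dfree_var_iff in Hi as ->. erewrite nth_error_nth; eauto. constructor.
  - apply dfree_lam_iff in Hi. pose proof (fresh_gt f n). apply free_lam_iff. split.
    + apply (IH _ _ (S i)); eauto using bounded_cons_fresh.
    + intros ->. apply nth_error_In, Hns in E. lia.
  - apply free_app_iff. apply dfree_app_iff in Hi as [Hi|Hi]; [left; eauto | right].
    apply (IHu _ _ i); eauto using bounded_binder_bound.
Qed.

Lemma of_db_HRM t : forall n ns,
  (forall z, In z ns -> O z <= n) -> decreasing_on (fun _ => True) ns ->
  (forall i, dfree i t -> i < length ns) -> dHRM t -> HRM O (of_db n ns t).
Proof.
  induction t as [j|f b IH|t IHt u IHu]; intros n ns Hns Hdec Hlen Ht; simpl;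
    inversion Ht as [|? ? Hb H0|? ? Htt Hu Hdom]; subst.
  - constructor.
  - pose proof (bounded_cons_fresh f n ns Hns) as Hns'. constructor.
    + apply IH; auto using decreasing_cons_fresh. exact (scope_cons _ _ _ _ Hlen).
    + apply (free_of_db b _ _ 0); auto.
    + intros y Hy. destruct (free_of_db_inv b _ _ _ (scope_cons _ _ _ _ Hlen) Hy) as [i [_ E]].
      apply Hns', nth_error_In with i, E.
  - assert (Hlent : forall i, dfree i t -> i < length ns) by auto using dfree_appl.
    assert (Hlenu : forall i, dfree i u -> i < length ns) by auto using dfree_appr.
    constructor; eauto using bounded_binder_bound.
    intros a Ha. destruct (free_of_db_inv t _ _ _ Hlent Ha) as [i [Hi Ea]].
    destruct (Hdom i Hi) as [j [Hj Le]].
    destruct (nth_error ns j) as [c|] eqn:Ec;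
      [|apply nth_error_None in Ec; specialize (Hlenu j Hj); lia].
    exists c. split; [apply (free_of_db u _ _ j); eauto using bounded_binder_bound|].
    destruct (Nat.eq_dec j i) as [->|Ne].
    + rewrite Ea in Ec. injection Ec as ->. lia.
    + enough (O a < O c) by lia. apply (Hdec j i); auto. lia.
Qed.

Lemma of_db_has_type t : forall n ns p, (forall z, In z ns -> O z <= n) ->
  decreasing_on (fun _ => True) ns -> dhas_type (map Omega ns) t p -> dHRM t ->
  has_type O Omega (of_db n ns t) p.
Proof.
  induction t as [j|f b IH|t IHt u IHu]; intros n ns p Hns Hdec Ht Hh;
    pose proof (of_db_HRM _ n ns Hns Hdec (dhas_type_map_scope _ _ _ Ht) Hh) as HRMt; simpl in *;
    inversion Ht as [? ? ? Ej|? ? ? ? Hb|? ? ? c ? Htt Hu]; inversion Hh; subst.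
  - rewrite nth_error_map in Ej.
    destruct (nth_error ns j) as [y|] eqn:Ey; simpl in Ej; [|discriminate].
    injection Ej as <-. erewrite nth_error_nth; eauto. constructor.
  - constructor; auto.
    + rewrite <- (fresh_type f n) at 2. constructor.
    + apply IH; eauto using bounded_cons_fresh, decreasing_cons_fresh.
      simpl. rewrite fresh_type. exact Hb.
  - econstructor; eauto. apply IHu; eauto using bounded_binder_bound.
Qed.

Lemma of_db_normal t : forall n ns,
  (neutral t -> beta_normal (of_db n ns t) /\ forall x M, of_db n ns t <> Lam x M) /\
  (normal t -> beta_normal (of_db n ns t)).
Proof.
  unfold beta_normal. induction t as [j|f b IH|t IHt u IHu]; intros n ns; simpl.
  - split; [split; [inversion 1 | discriminate] | inversion 2].
  - split; [tauto|]. intros Nb Hr. inversion Hr; subst. eapply (proj2 (IH _ _)); eauto.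
  - assert (Happ : neutral t /\ normal u -> ~ has_redex (App (of_db n ns t)
       (of_db (binder_bound (of_db n ns t) n) ns u))).
    { intros [Net Nu] Hr. inversion Hr; subst.
      - eapply (proj2 (proj1 (IHt n ns) Net)); eauto.
      - eapply (proj1 (proj1 (IHt n ns) Net)); eauto.
      - eapply (proj2 (IHu _ ns)); eauto. }
    split; [intro; split; [auto | discriminate] | auto].
Qed.

Lemma NF_inhabited_of_db r p : dhas_type [] r p -> dHRM r -> normal r -> NF_inhabited O Omega p.
Proof.
  intros Hr_type Hr_HRM Hr_normal. set (N := of_db 0 [] r).
  assert (N_closed : closed N).
  { intros y Hy.
    assert (r_scope : forall i, dfree i r -> i < length (@nil X))
      by (intros i Hi; exact (dhas_type_dfree _ _ _ _ Hr_type Hi)).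
    destruct (free_of_db_inv r 0 [] y r_scope Hy) as [[|i] [_ E]]; discriminate. }
  exists N. split; [|split; [split|split]].
  - exact N_closed.
  - apply of_db_NoDup.
  - intros x [Hx _]. exact (N_closed x Hx).
  - exact (proj2 (of_db_normal r 0 []) Hr_normal).
  - apply of_db_has_type; auto; [intros z [] | intros [|i] j a b _ Ha; discriminate].
Qed.
End Named.

Lemma infinite_pred_unbounded (X : Type) (P : X -> Prop) (O : X -> nat) :
  (forall x y, O x = O y -> x = y) -> infinite_pred P -> forall n, exists x, P x /\ n < O x.
Proof.
  intros O_inj HP n. apply NNPP. intros Hbounded. apply HP.
  exists (flat_map (fun m => match excluded_middle_informative (exists x, P x /\ O x = m) with
                             | left H => [proj1_sig (constructive_indefinite_description _ H)]
                             | right _ => []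
                             end) (seq 0 (S n))).
  intros x Hx. apply in_flat_map. exists (O x). split.
  - apply in_seq. assert (O x <= n) by (apply Nat.nlt_ge; intro; apply Hbounded; eauto). lia.
  - destruct excluded_middle_informative as [H|H]; [|exfalso; eauto].
    destruct constructive_indefinite_description as [y [Py Hy]]. left. apply O_inj, Hy.
Qed.

Lemma fresh_choice {A X : Type} (O : X -> nat) (Omega : X -> formula A) :
  (forall x y, O x = O y -> x = y) ->
  (forall phi : formula A, infinite_pred (fun x => Omega x = phi)) ->
  exists fresh : formula A -> nat -> X,
    (forall f n, Omega (fresh f n) = f) /\ (forall f n, n < O (fresh f n)).
Proof.
  intros O_inj Omega_inf.
  assert (Hfresh : forall f n, {x | Omega x = f /\ n < O x}).
  { intros f n. apply constructive_indefinite_description, infinite_pred_unbounded; auto. }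
  exists (fun f n => proj1_sig (Hfresh f n)).
  split; intros f n; apply (proj2_sig (Hfresh f n)).
Qed.

Theorem lemma1p6 (A X : Type) (O : X -> nat)
  (O_inj : forall x y, O x = O y -> x = y)
  (X_inf : infinite_pred (fun _ : X => True))
  (Omega : X -> formula A)
  (Omega_inf : forall phi : formula A, infinite_pred (fun x => Omega x = phi))
  (phi : formula A) :
  (exists M : term X, closed M /\ well_named M /\ has_type O Omega M phi) ->
  NF_inhabited O Omega phi.
Proof.
  (* [X_inf] is implied by [Omega_inf] and not needed. *)
  intros [M [M_closed [M_named M_type]]].
  destruct (closed_to_db O Omega O_inj M phi M_closed M_named M_type) as [t_type t_HRM].
  destruct (weak_normalization _ _ _ t_type) as [r [t_r r_normal]].
  destruct (fresh_choice O Omega O_inj Omega_inf) as [fresh [fresh_type fresh_gt]].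
  apply (NF_inhabited_of_db O Omega fresh (fresh phi 0) fresh_type fresh_gt r).
  - eapply dsteps_has_type; eauto.
  - eapply dsteps_dHRM; eauto.
  - exact r_normal.
Qed.
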